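(* Let $M=p_1^{n_1}\cdots p_K^{n_K}$ with distinct primes and $n_\nu\in\mathbb{N}$, and let $A\oplus B=\mathbb{Z}_M$. Then every fiber $Z=x*F_i$ ($x\in\mathbb{Z}_M$, $i\in\{1,\dots,K\}$) splits with parity $(A,B)$ or with parity $(B,A)$. In particular, for any $a\in\Sigma_A(Z)$ and $b\in\Sigma_B(Z)$ we have $\Sigma_A(Z)\subset\Pi(a,p_i^{n_i-1})$ and $\Sigma_B(Z)\subset\Pi(b,p_i^{n_i-1})$.
   Context: $A\oplus B=\mathbb{Z}_M$ means every element of $\mathbb{Z}_M$ is uniquely $a+b$ with $a\in A$, $b\in B$. $F_i=\{0,M/p_i,\dots,(p_i-1)M/p_i\}$, $x*F_i=\{x+f:f\in F_i\}$. $\Pi(y,p_i^\alpha)=\{y'\in\mathbb{Z}_M:p_i^\alpha\mid y-y'\}$. For $Z\subset\mathbb{Z}_M$, $\Sigma_A(Z)=\{a\in A: a+b\in Z\text{ for some }b\in B\}$, $\Sigma_B(Z)=\{b\in B: a+b\in Z\text{ for some }a\in A\}$. A fiber $Z=x*F_i$ splits with parity $(A,B)$ if $p_i^{n_i}\mid a-a'$ for all $a,a'\in\Sigma_A(Z)$ and, for all distinct $b,b'\in\Sigma_B(Z)$, $p_i^{n_i-1}\mid b-b'$ but $p_i^{n_i}\nmid b-b'$; parity $(B,A)$ is defined with $A,B$ interchanged. *)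

(* Z_M is modelled by the ordinals 'I_M (residues 0..M-1),
   with addition (x + y) %% M. *)
From mathcomp Require Import all_ssreflect.
Set Implicit Arguments. Unset Strict Implicit. Unset Printing Implicit Defensive.

Section Defs.
Variable M : nat.

Definition zaddM (x y : 'I_M) : nat := (x + y) %% M.

Definition tiling (A B : {set 'I_M}) : Prop :=
  forall z : 'I_M,
    (exists a b, [/\ a \in A, b \in B & zaddM a b = z]) /\
    (forall a b a' b', a \in A -> b \in B -> a' \in A -> b' \in B ->
       zaddM a b = z -> zaddM a' b' = z -> a = a' /\ b = b').

Definition fiber (x : 'I_M) (p : nat) : {set 'I_M} :=
  [set y : 'I_M | [exists k : 'I_p, (y : nat) == (x + k * (M %/ p)) %% M]].

Definition Pi (y : 'I_M) (q : nat) : {set 'I_M} :=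
  [set y' : 'I_M | (y : nat) == y' %[mod q]].

Definition SigmaA (A B Z : {set 'I_M}) : {set 'I_M} :=
  [set a in A | [exists b in B, [exists z in Z, (z : nat) == zaddM a b]]].
Definition SigmaB (A B Z : {set 'I_M}) : {set 'I_M} :=
  [set b in B | [exists a in A, [exists z in Z, (z : nat) == zaddM a b]]].

Definition splits_with_parity (A B Z : {set 'I_M}) (p n : nat) : Prop :=
  (forall a a', a \in SigmaA A B Z -> a' \in SigmaA A B Z ->
     (a : nat) = a' %[mod p ^ n]) /\
  (forall b b', b \in SigmaB A B Z -> b' \in SigmaB A B Z -> b != b' ->
     (b : nat) = b' %[mod p ^ n.-1] /\ (b : nat) <> b' %[mod p ^ n]).
End Defs.

From mathcomp Require Import all_boot all_algebra zify ring.
Set Implicit Arguments. Unset Strict Implicit. Unset Printing Implicit Defensive.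
Import GRing.Theory.

(* Let a + b and a' + b' (a, a' in A, b, b' in B) represent two points of the
   fiber x * F_i, and put p = p_i, n = n_i.  Then (a - a') + (b - b') is
   c * M/p modulo M for some integer c.  If neither a - a' nor b - b' were
   divisible by p^n, there would be a t coprime to M with
   t (a - a') + (b - b') = 0 mod M; but by Tijdeman's theorem t A (+) B is again
   a tiling, which forces a = a'.  So any two representations agree mod p^n in
   their A-components or in their B-components, and then one of the two
   families agrees mod p^n throughout.  In the other family distinct elements
   differ mod p^n (otherwise both components agree mod p^n, forcing c = 0),
   while all differences are divisible by p^(n-1), as (a - a') + (b - b') is.

   Tijdeman's theorem is proved one prime factor q of t at a time: in
   F_q[X]/(X^M - 1) the Frobenius turns A(X^t) B(X) = 1 + X + ... + X^(M-1)
   into A(X^(qt)) B(X) = |A|^(q-1) (1 + X + ... + X^(M-1)), and q does not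
   divide |A|, which divides M. *)

Section DilationCount.
Variables (M : nat) (A B : {set 'I_M}).

Definition dilation_count (t : nat) (z : 'I_M) : nat :=
  #|[set u in setX A B | (t * u.1 + u.2) %% M == z]|.

Lemma sum_dilation_count t : 0 < M -> \sum_(z < M) dilation_count t z = #|A| * #|B|.
Proof.
move=> M_gt0; rewrite -cardsX -sum1_card.
pose residue (u : 'I_M * 'I_M) := Ordinal (ltn_pmod (t * u.1 + u.2) M_gt0).
rewrite (partition_big residue xpredT) //=.
apply: eq_bigr => z _; rewrite /dilation_count -sum1_card.
by apply: eq_bigl => u; rewrite !inE -val_eqE.
Qed.

Lemma tiling_dilation_count1 : tiling A B -> forall z, dilation_count 1 z = 1.
Proof.
move=> tAB z; have [[a [b [aA bB za]]] uniq_ab] := tAB z.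
apply/eqP/cards1P; exists (a, b); apply/setP => -[a' b']; rewrite !inE /= mul1n.
apply/idP/eqP => [/andP[/andP[a'A b'B] /eqP e]|[-> ->]]; last by rewrite aA bB; apply/eqP.
by have [-> ->] := uniq_ab a' b' a b a'A b'B aA bB e za.
Qed.

Lemma dilation_count_inj t (a a' b b' : 'I_M) :
  (forall z, dilation_count t z = 1) ->
  a \in A -> a' \in A -> b \in B -> b' \in B ->
  t * a + b = t * a' + b' %[mod M] -> a = a' /\ b = b'.
Proof.
move=> count1 aA a'A bB b'B e.
have M_gt0 : 0 < M by apply: leq_ltn_trans (ltn_ord a).
have /eqP/cards1P [u def_u] := count1 (Ordinal (ltn_pmod (t * a + b) M_gt0)).
have mem_u (c d : 'I_M) : c \in A -> d \in B -> t * c + d = t * a + b %[mod M] -> (c, d) = u.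
  by move=> cA dB ecd; apply/set1P; rewrite -def_u !inE /= cA dB; apply/eqP.
by have [-> ->] : (a, b) = (a', b') by rewrite (mem_u a b) ?(mem_u a' b').
Qed.

End DilationCount.

Lemma eq1_of_sum_card (I : finType) (F : I -> nat) :
  (forall i, 0 < F i) -> \sum_i F i = #|I| -> forall i, F i = 1.
Proof.
move=> F_gt0 sumF i; have [_] := @leqif_sum I xpredT _ (fun=> 1) F (fun i _ => leqif_eq (F_gt0 i)).
by rewrite sum1_card sumF eqxx => /esym/forallP/(_ i)/eqP.
Qed.

Section FrobeniusStep.
Variables (M q : nat) (A B : {set 'I_M}).
Hypotheses (M_gt1 : 1 < M) (q_prime : prime q) (q_ndvd_M : ~~ (q %| M)).
Local Open Scope ring_scope.

Let h : {poly 'F_q} := 'X^M - 1.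
Let x : {poly %/ h} := in_qpoly h 'X.
Let S : {poly %/ h} := \sum_(k < M) x ^+ k.

Lemma mk_monic_cyclic : mk_monic h = h.
Proof.
rewrite /mk_monic /h size_XnsubC ?(ltnW M_gt1) // ltnS (ltnW M_gt1) /=.
by rewrite monicXnsubC // (ltnW M_gt1).
Qed.

Lemma size_mk_monic_cyclic : size (mk_monic h) = M.+1.
Proof. by rewrite mk_monic_cyclic /h size_XnsubC // ltnW. Qed.

Lemma expx_in_qpoly k : x ^+ k = in_qpoly h 'X^k.
Proof. by rewrite /x -rmorphXn. Qed.

Lemma expx_M : x ^+ M = 1.
Proof.
rewrite expx_in_qpoly -[X in in_qpoly h X](subrK 1) in_qpolyD in_qpoly1.
suff -> : in_qpoly h ('X^M - 1) = 0 by rewrite add0r.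
apply: val_inj; rewrite /in_qpoly /=.
by rewrite mk_monic_cyclic Pdiv.RingMonic.rmodpp // monicXnsubC // ltnW.
Qed.

Lemma val_expx k : polyn (x ^+ k) = 'X^(k %% M)%N.
Proof.
rewrite {1}(divn_eq k M) exprD mulnC exprM expx_M expr1n mul1r expx_in_qpoly.
by rewrite in_qpoly_small // size_mk_monic_cyclic size_polyXn ltnS ltn_pmod // ltnW.
Qed.

Lemma coef_sum_expx (T : finType) (X : {set T}) (e : T -> nat) (z : 'I_M) :
  (polyn (\sum_(u in X) x ^+ e u))`_z = #|[set u in X | (e u %% M)%N == z]|%:R.
Proof.
rewrite poly_of_qpoly_sum coef_sum -sum1_card natr_sum big_mkcond [RHS]big_mkcond /=.
by apply: eq_bigr => u _; rewrite inE val_expx coefXn eq_sym; case: (u \in X); case: eqP.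
Qed.

Lemma qpoly_eq_coef (r r' : {poly %/ h}) :
  (forall z : 'I_M, (polyn r)`_z = (polyn r')`_z) -> r = r'.
Proof.
move=> e; apply/npolyP => i; case: (ltnP i M) => [iM|Mi]; first exact: (e (Ordinal iM)).
by rewrite !big_coef_npoly // size_mk_monic_cyclic.
Qed.

Lemma mulx_S : x * S = S.
Proof.
rewrite /S mulr_sumr; case: M M_gt1 expx_M => // m _ expx_m.
rewrite big_ord_recr big_ord_recl /= -exprS expx_m expr0 addrC.
by congr (_ + _); apply: eq_bigr => i _; rewrite -exprS.
Qed.

Lemma expx_mulS k : x ^+ k * S = S.
Proof. by elim: k => [|k IH]; rewrite ?mul1r // exprS -mulrA IH mulx_S. Qed.

Lemma coef_S (z : 'I_M) : (polyn S)`_z = 1.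
Proof.
rewrite poly_of_qpoly_sum coef_sum (bigD1 z) //= val_expx modn_small // coefXn eqxx.
rewrite big1 ?addr0 // => k k_neq_z; rewrite val_expx modn_small // coefXn.
by rewrite eq_sym val_eqE (negPf k_neq_z).
Qed.

Lemma dilation_count_Frobenius t :
  (forall z, dilation_count A B t z = 1%N) -> forall z, dilation_count A B (q * t) z = 1%N.
Proof.
move=> count1.
have M_gt0 : (0 < M)%N := ltnW M_gt1.
have card_AB : (#|A| * #|B|)%N = M.
  rewrite -(sum_dilation_count A B t M_gt0).
  by under eq_bigr do rewrite count1; rewrite sum1_card card_ord.
have q_ndvd_A : ~~ (q %| #|A|)%N.
  by apply: contra q_ndvd_M => /dvdn_trans; apply; apply/dvdnP; exists #|B|; rewrite mulnC.
pose mask s : {poly %/ h} := \sum_(u in setX A B) x ^+ (s * u.1 + u.2).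
pose maskA s : {poly %/ h} := \sum_(a in A) x ^+ (s * a).
have mask_mul s : mask s = maskA s * \sum_(b in B) x ^+ b.
  rewrite mulr_suml; under eq_bigr do rewrite mulr_sumr; rewrite pair_big.
  by apply: eq_big => [u|u _]; rewrite ?inE // exprD.
have mask_t : mask t = S.
  by apply: qpoly_eq_coef => z; rewrite coef_sum_expx coef_S -/(dilation_count _ _ _ _) count1.
have maskA_expS j : maskA t ^+ j * S = (#|A| ^ j)%:R * S.
  elim: j => [|j IH]; first by rewrite !mul1r.
  rewrite exprSr -mulrA mulr_suml; under eq_bigr do rewrite expx_mulS.
  by rewrite sumr_const -[S *+ _]mulr_natl mulrCA IH mulrA -natrM expnS.
have pchar_q : q \in [pchar {poly %/ h}] by rewrite pchar_qpoly pchar_Fp.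
have maskA_qt : maskA (q * t)%N = maskA t ^+ q.
  rewrite -(pFrobenius_autE pchar_q) rmorph_sum; apply: eq_bigr => a _.
  by rewrite /= pFrobenius_autE -exprM [(t * a * q)%N]mulnC mulnA.
have mask_qt : mask (q * t)%N = (#|A| ^ q.-1)%:R * S.
  rewrite mask_mul maskA_qt -[X in maskA t ^+ X](prednK (prime_gt0 q_prime)) exprSr.
  by rewrite -mulrA -mask_mul mask_t maskA_expS.
(* All coefficients of [mask (q * t)] are [|A|^(q-1) <> 0] in ['F_q], and the
   counts add up to [M]. *)
apply: eq1_of_sum_card; last by rewrite sum_dilation_count // card_AB card_ord.
move=> z; rewrite lt0n; apply: contra q_ndvd_A => /eqP count0.
have := coef_sum_expx (setX A B) (fun u => q * t * u.1 + u.2)%N z.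
rewrite -/(mask _) mask_qt -/(dilation_count _ _ _ _) count0 mulr_natl raddfMn coefMn coef_S.
by move/eqP; rewrite -(dvdn_pcharf (pchar_Fp q_prime)) Euclid_dvdX // => /andP[].
Qed.

End FrobeniusStep.

Lemma dilation_count_coprime (M : nat) (A B : {set 'I_M}) :
  1 < M -> (forall z, dilation_count A B 1 z = 1) ->
  forall t, coprime t M -> forall z, dilation_count A B t z = 1.
Proof.
move=> M_gt1 count1 t; elim/ltn_ind: t => -[|[|t]] IH t_coprime //.
  by move: t_coprime; rewrite /coprime gcd0n => /eqP M1; rewrite M1 in M_gt1.
have r_prime := pdiv_prime (isT : 1 < t.+2).
have r_dvd := pdiv_dvd t.+2.
have r_ndvd_M : ~~ (pdiv t.+2 %| M).
  by rewrite -prime_coprime // (coprime_dvdl r_dvd t_coprime).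
have quot_lt : t.+2 %/ pdiv t.+2 < t.+2 by rewrite ltn_Pdiv // prime_gt1.
have quot_coprime : coprime (t.+2 %/ pdiv t.+2) M.
  by apply: coprime_dvdl t_coprime; apply/dvdnP; exists (pdiv t.+2); rewrite mulnC divnK.
move=> z; have := dilation_count_Frobenius M_gt1 r_prime r_ndvd_M (IH _ quot_lt quot_coprime) z.
by rewrite mulnC divnK.
Qed.

Theorem tiling_dilation_inj (M : nat) (A B : {set 'I_M}) (t : nat) (a a' b b' : 'I_M) :
  tiling A B -> coprime t M -> a \in A -> a' \in A -> b \in B -> b' \in B ->
  t * a + b = t * a' + b' %[mod M] -> a = a' /\ b = b'.
Proof.
move=> tAB t_coprime aA a'A bB b'B.
have [M_gt1 | M_le1] := ltnP 1 M.
  have count1 := dilation_count_coprime M_gt1 (tiling_dilation_count1 tAB) t_coprime.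
  exact: dilation_count_inj count1 aA a'A bB b'B.
move=> _; split; apply/val_inj => /=.
  by move: (ltn_ord a) (ltn_ord a'); lia.
by move: (ltn_ord b) (ltn_ord b'); lia.
Qed.

Section IntegerCongruences.
Local Open Scope ring_scope.

Lemma eqn_mod_dvdz (d m n : nat) : (m == n %[mod d])%N = (d%:Z %| m%:Z - n%:Z)%Z.
Proof. by rewrite -eqz_mod_dvd !modz_nat eqz_nat. Qed.

Lemma dvdz_small_eq0 (p : nat) (c : int) : (`|c| < p)%N -> (p%:Z %| c)%Z -> c = 0%R.
Proof.
move=> c_lt; rewrite dvdzE absz_nat => c_dvd; apply/eqP; rewrite -absz_eq0 eqn0Ngt.
by apply: contraL c_lt => c_gt0; rewrite -leqNgt dvdn_leq.
Qed.

Lemma tiling_dilation_injz (M : nat) (A B : {set 'I_M}) (t : int) (a a' b b' : 'I_M) :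
  tiling A B -> coprimez t M%:Z -> a \in A -> a' \in A -> b \in B -> b' \in B ->
  (M%:Z %| t * (a%:Z - a'%:Z) + (b%:Z - b'%:Z))%Z -> a = a' /\ b = b'.
Proof.
move=> tAB t_coprime aA a'A bB b'B dvd_M.
have M_neq0 : M%:Z != 0 by rewrite eqz_nat -lt0n (leq_ltn_trans _ (ltn_ord a)).
pose t' := `|(t %% M%:Z)%Z|%N.
have t'E : t'%:Z = (t %% M%:Z)%Z by rewrite /t' gez0_abs // modz_ge0.
apply: (tiling_dilation_inj (t := t')) => //.
  by move: t_coprime; rewrite /coprimez -gcdz_modl -/(coprimez _ _) coprimezE absz_nat.
apply/eqP; rewrite eqn_mod_dvdz.
have -> : (t' * a + b)%N%:Z - (t' * a' + b')%N%:Z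
          = t * (a%:Z - a'%:Z) + (b%:Z - b'%:Z) + (t'%:Z - t) * (a%:Z - a'%:Z).
  by rewrite !PoszD !PoszM; ring.
rewrite rpredD // dvdz_mulr //; apply/dvdzP; exists (- (t %/ M%:Z)%Z).
by rewrite t'E {2}(divz_eq t M%:Z); ring.
Qed.

Lemma exists_mul_congr_pexp (p n : nat) (D c : int) :
  prime p -> ~~ ((p ^ n)%:Z %| D)%Z ->
  exists2 s : int, ((p ^ n)%:Z %| s * D + c * (p ^ n.-1)%:Z)%Z
                 & (~~ ((p ^ n.-1)%:Z %| D)%Z -> (p%:Z %| s)%Z).
Proof.
move=> p_prime PnD.
have [v v_le_n gE] : exists2 v, (v <= n)%N & gcdn `|D| (p ^ n) = (p ^ v)%N.
  by apply/dvdn_pfactor => //; apply: dvdn_gcdr.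
have pv_dvd_D : ((p ^ v)%:Z %| D)%Z by rewrite dvdzE absz_nat -gE dvdn_gcdl.
have v_lt_n : (v < n)%N.
  by rewrite ltn_neqAle v_le_n andbT; apply: contra PnD => /eqP <-.
have [u [w Bez]] := Bezoutz D (p ^ n)%:Z.
rewrite /gcdz !absz_nat gE in Bez.
have pn1E : (p ^ n.-1)%:Z = (p ^ (n.-1 - v))%:Z * (p ^ v)%:Z.
  by rewrite -PoszM -expnD subnK // -ltnS prednK // (leq_ltn_trans _ v_lt_n).
exists (- c * (p ^ (n.-1 - v))%:Z * u).
  by apply/dvdzP; exists (c * (p ^ (n.-1 - v))%:Z * w); rewrite pn1E -Bez; ring.
move=> Pn1nD; have v_lt : (v < n.-1)%N.
  rewrite ltn_neqAle -ltnS prednK ?v_lt_n ?andbT //; last exact: leq_ltn_trans v_lt_n.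
  by apply: contra Pn1nD => /eqP <-.
by rewrite dvdz_mulr // dvdz_mull // dvdzE !absz_nat dvdn_exp ?subn_gt0.
Qed.

Lemma exists_coprime_dilation (p n M M' : nat) (D E c : int) :
  prime p -> M = (p ^ n * M')%N ->
  (M%:Z %| D + E - c * (p ^ n.-1 * M')%:Z)%Z ->
  ~~ ((p ^ n)%:Z %| D)%Z -> ~~ ((p ^ n)%:Z %| E)%Z ->
  exists2 t : int, coprimez t M%:Z & (M%:Z %| t * D + E)%Z.
Proof.
move=> p_prime -> dvd_sum PnD PnE.
have n_gt0 : (0 < n)%N by case: n PnD {dvd_sum PnE} => //; rewrite dvd1z.
have [s dvd_s s_mod] := exists_mul_congr_pexp c p_prime PnD.
(* [t = 1 mod M'], and [s] corrects the [p]-part of [t * D + E]. *)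
set t := 1 + s * M'%:Z.
have dvd_t : ((p ^ n * M')%:Z %| t * D + E)%Z.
  have -> : t * D + E = D + E - c * (p ^ n.-1 * M')%:Z + (s * D + c * (p ^ n.-1)%:Z) * M'%:Z.
    by rewrite PoszM /t; ring.
  by rewrite rpredD // PoszM dvdz_mul.
exists t => //; rewrite PoszM coprimezMr; apply/andP; split; last first.
  by apply/coprimezP; exists (1, - s) => /=; rewrite /t; ring.
rewrite coprimezE absz_nat coprime_pexpr // coprime_sym prime_coprime // -(absz_nat p) -dvdzE.
(* If [p^(n-1) | D], then [p | t] would give [p^n | t * D], hence [p^n | E]. *)
have [Pn1D | Pn1nD] := boolP ((p ^ n.-1)%:Z %| D)%Z.
  apply: contra PnE => p_dvd_t.
  have -> : E = (t * D + E) - t * D by ring.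
  rewrite rpredB //; first by apply: dvdz_trans dvd_t; rewrite PoszM dvdz_mulr.
  by rewrite -(prednK n_gt0) expnS PoszM dvdz_mul.
rewrite /t (rpredDr _ (dvdz_mulr _ (s_mod Pn1nD))) dvdz1 absz_nat.
by apply: contraTN p_prime => /eqP ->.
Qed.

End IntegerCongruences.

Lemma eq_or_eq_const (T : finType) (U V : eqType) (S : {pred T}) (f : T -> U) (g : T -> V) :
  {in S &, forall u v, (f u == f v) || (g u == g v)} ->
  {in S &, forall u v, f u = f v} \/ {in S &, forall u v, g u = g v}.
Proof.
move=> fg; have [/existsP[u /existsP[v /and3P[Su Sv f_uv]]]|f_const] :=
  boolP [exists u, exists v, [&& u \in S, v \in S & f u != f v]]; last first.
  left=> u v Su Sv; apply/eqP; move/existsPn/(_ u)/existsPn/(_ v): f_const.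
  by rewrite Su Sv negbK.
right; suff g_const w : w \in S -> g w = g u by move=> w w' Sw Sw'; rewrite !g_const.
move=> Sw; have /orP[/eqP f_wu|/eqP //] := fg w u Sw Su.
have /orP[/eqP f_wv|/eqP ->] := fg w v Sw Sv; first by rewrite -f_wu f_wv eqxx in f_uv.
by have /orP[/eqP f_uv'|/eqP ->] := fg u v Su Sv; first by rewrite f_uv' eqxx in f_uv.
Qed.

Lemma zaddMC (M : nat) (a b : 'I_M) : zaddM a b = zaddM b a.
Proof. by rewrite /zaddM addnC. Qed.

Lemma tiling_sym (M : nat) (A B : {set 'I_M}) : tiling A B -> tiling B A.
Proof.
move=> tAB z; have [[a [b [aA bB e]]] uniq_ab] := tAB z.
split=> [|b' a' b'' a'' b'B a'A b''B a''A]; first by exists b, a; rewrite zaddMC.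
rewrite zaddMC [zaddM b'' _]zaddMC => e1 e2.
by have [-> ->] := uniq_ab a' b' a'' b'' a'A b'B a''A b''B e1 e2.
Qed.

Lemma SigmaA_swap (M : nat) (A B Z : {set 'I_M}) : SigmaA B A Z = SigmaB A B Z.
Proof.
apply/setP => y; rewrite !inE; congr (_ && _); apply: eq_existsb => a.
by congr (_ && _); apply: eq_existsb => z; rewrite zaddMC.
Qed.

Section FiberSplitting.
Variables (M p n M' : nat) (A B : {set 'I_M}) (x : 'I_M).
Hypotheses (p_prime : prime p) (n_gt0 : 0 < n) (p_coprime_M' : coprime p M').
Hypotheses (M_eq : M = p ^ n * M') (tAB : tiling A B).
Local Open Scope ring_scope.

Definition on_fiber (a b : 'I_M) : bool :=
  [&& a \in A, b \in B & [exists k : 'I_p, a + b == x + k * (M %/ p) %[mod M]]%N].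

Lemma exists_fiber_zaddM (a b : 'I_M) :
  [exists z in fiber x p, (z : nat) == zaddM a b]
  = [exists k : 'I_p, a + b == x + k * (M %/ p) %[mod M]]%N.
Proof.
have M_gt0 : (0 < M)%N by apply: leq_ltn_trans (ltn_ord a).
apply/existsP/existsP => [[z /andP[]]|[k e]].
  by rewrite inE => /existsP[k /eqP z_k] /eqP z_ab; exists k; rewrite -z_k z_ab.
exists (Ordinal (ltn_pmod (a + b) M_gt0)); rewrite inE /= eqxx andbT.
by apply/existsP; exists k.
Qed.

Lemma SigmaA_on_fiber a : (a \in SigmaA A B (fiber x p)) = [exists b, on_fiber a b].
Proof.
rewrite inE; apply/andP/existsP => [[aA /existsP[b /andP[bB]]]|[b /and3P[aA bB e]]].
  by rewrite exists_fiber_zaddM => e; exists b; rewrite /on_fiber aA bB.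
by split=> //; apply/existsP; exists b; rewrite bB exists_fiber_zaddM.
Qed.

Lemma SigmaB_on_fiber b : (b \in SigmaB A B (fiber x p)) = [exists a, on_fiber a b].
Proof.
rewrite inE; apply/andP/existsP => [[bB /existsP[a /andP[aA]]]|[a /and3P[aA bB e]]].
  by rewrite exists_fiber_zaddM => e; exists a; rewrite /on_fiber aA bB.
by split=> //; apply/existsP; exists a; rewrite aA exists_fiber_zaddM.
Qed.

Lemma on_fiber_sub (a b a' b' : 'I_M) : on_fiber a b -> on_fiber a' b' ->
  exists2 c : int, (`|c| < p)%N &
    (M%:Z %| (a%:Z - a'%:Z) + (b%:Z - b'%:Z) - c * (p ^ n.-1 * M')%N%:Z)%Z.
Proof.
case/and3P => _ _ /existsP[k]; rewrite eqn_mod_dvdz => dvd_k.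
case/and3P => _ _ /existsP[l]; rewrite eqn_mod_dvdz => dvd_l.
exists (k%:Z - l%:Z); first by move: (ltn_ord k) (ltn_ord l); lia.
have <- : (M %/ p = p ^ n.-1 * M')%N.
  by rewrite M_eq -(prednK n_gt0) expnS -mulnA mulKn // prime_gt0.
have -> : (a%:Z - a'%:Z) + (b%:Z - b'%:Z) - (k%:Z - l%:Z) * (M %/ p)%N%:Z
          = ((a + b)%N%:Z - (x + k * (M %/ p))%N%:Z) - ((a' + b')%N%:Z - (x + l * (M %/ p))%N%:Z).
  by rewrite !PoszD !PoszM; ring.
by rewrite rpredB.
Qed.

Lemma on_fiber_inj (a b a' b' : 'I_M) : on_fiber a b -> on_fiber a' b' ->
  (a = a' %[mod p ^ n] -> b = b' %[mod p ^ n] -> a = a' /\ b = b')%N.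
Proof.
move=> fab fab' /eqP; rewrite eqn_mod_dvdz => dvd_a /eqP; rewrite eqn_mod_dvdz => dvd_b.
have [c c_lt dvd_c] := on_fiber_sub fab fab'.
have c0 : c = 0.
  have pn1_neq0 : (p ^ n.-1)%:Z != 0 by rewrite eqz_nat expn_eq0 negb_and -lt0n prime_gt0.
  apply: (dvdz_small_eq0 c_lt); rewrite -(Gauss_dvdzl c (p_coprime_M' : coprimez p M')).
  rewrite -(@dvdz_mul2l _ _ _ pn1_neq0) -PoszM -expnSr prednK //.
  have -> : (p ^ n.-1)%:Z * (c * M'%:Z) = c * (p ^ n.-1 * M')%N%:Z by rewrite PoszM; ring.
  rewrite -(rpredBl _ (rpredD dvd_a dvd_b)); apply: dvdz_trans dvd_c.
  by rewrite M_eq PoszM dvdz_mulr.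
case/and3P: fab => aA bB _; case/and3P: fab' => a'A b'B _.
apply: (tiling_dilation_injz (t := 1)) => //; first by rewrite /coprimez gcd1z.
by move: dvd_c; rewrite c0 mul0r subr0 mul1r.
Qed.

Lemma on_fiber_eq_mod (a b a' b' : 'I_M) : on_fiber a b -> on_fiber a' b' ->
  ((a == a' %[mod p ^ n]) || (b == b' %[mod p ^ n]))%N.
Proof.
move=> fab fab'; rewrite !eqn_mod_dvdz; apply/norP => -[Pn_a Pn_b].
have [c _ dvd_c] := on_fiber_sub fab fab'.
have [t t_coprime dvd_t] := exists_coprime_dilation p_prime M_eq dvd_c Pn_a Pn_b.
case/and3P: fab => aA bB _; case/and3P: fab' => a'A b'B _.
have [a_eq _] := tiling_dilation_injz tAB t_coprime aA a'A bB b'B dvd_t.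
by move: Pn_a; rewrite a_eq subrr dvdz0.
Qed.

Lemma on_fiber_eq_mod_pred (a b a' b' : 'I_M) : on_fiber a b -> on_fiber a' b' ->
  (a = a' %[mod p ^ n.-1] /\ b = b' %[mod p ^ n.-1])%N.
Proof.
move=> fab fab'.
have pn1_dvd_pn : ((p ^ n.-1)%:Z %| (p ^ n)%:Z)%Z by rewrite dvdzE !absz_nat dvdn_exp2l ?leq_pred.
have dvd_sum : ((p ^ n.-1)%:Z %| (a%:Z - a'%:Z) + (b%:Z - b'%:Z))%Z.
  have [c _ dvd_c] := on_fiber_sub fab fab'.
  have dvd_cM : ((p ^ n.-1)%:Z %| c * (p ^ n.-1 * M')%N%:Z)%Z.
    by rewrite dvdz_mull // PoszM dvdz_mulr.
  rewrite -(rpredBr _ dvd_cM); apply: dvdz_trans dvd_c.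
  by rewrite M_eq PoszM dvdz_mulr.
have /orP[|] := on_fiber_eq_mod fab fab'; rewrite eqn_mod_dvdz => /(dvdz_trans pn1_dvd_pn) dvd;
  split; apply/eqP; rewrite eqn_mod_dvdz //; move: dvd_sum.
  by rewrite (rpredDl _ dvd).
by rewrite (rpredDr _ dvd).
Qed.

Lemma SigmaA_sub_Pi a :
  a \in SigmaA A B (fiber x p) -> SigmaA A B (fiber x p) \subset Pi a (p ^ n.-1).
Proof.
rewrite SigmaA_on_fiber => /existsP[b fab]; apply/subsetP => a'.
by rewrite SigmaA_on_fiber inE => /existsP[b' fab']; have [/eqP] := on_fiber_eq_mod_pred fab fab'.
Qed.

Lemma SigmaB_sub_Pi b :
  b \in SigmaB A B (fiber x p) -> SigmaB A B (fiber x p) \subset Pi b (p ^ n.-1).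
Proof.
rewrite SigmaB_on_fiber => /existsP[a fab]; apply/subsetP => b'.
by rewrite SigmaB_on_fiber inE => /existsP[a' fab']; have [_ /eqP] := on_fiber_eq_mod_pred fab fab'.
Qed.

Lemma splits_of_SigmaA_eq_mod :
  {in SigmaA A B (fiber x p) &, forall a a' : 'I_M, a = a' %[mod p ^ n]}%N ->
  splits_with_parity A B (fiber x p) p n.
Proof.
move=> eq_mod_A; split=> // b b'; rewrite !SigmaB_on_fiber.
move=> /existsP[a fab] /existsP[a' fab'] b_neq.
split; first by have [_] := on_fiber_eq_mod_pred fab fab'.
have Sa : a \in SigmaA A B (fiber x p) by rewrite SigmaA_on_fiber; apply/existsP; exists b.
have Sa' : a' \in SigmaA A B (fiber x p) by rewrite SigmaA_on_fiber; apply/existsP; exists b'.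
move=> eq_b; have [_ b_eq] := on_fiber_inj fab fab' (eq_mod_A a a' Sa Sa') eq_b.
by rewrite b_eq eqxx in b_neq.
Qed.

Lemma fiber_dichotomy :
  {in SigmaA A B (fiber x p) &, forall a a' : 'I_M, a = a' %[mod p ^ n]}%N \/
  {in SigmaB A B (fiber x p) &, forall b b' : 'I_M, b = b' %[mod p ^ n]}%N.
Proof.
have [u v fu fv|eq_A|eq_B] := @eq_or_eq_const _ _ _ [pred u | on_fiber u.1 u.2]
  (fun u => u.1 %% p ^ n)%N (fun u => u.2 %% p ^ n)%N; first exact: on_fiber_eq_mod.
  left=> a a'; rewrite !SigmaA_on_fiber => /existsP[b fab] /existsP[b' fab'].
  exact: (eq_A (a, b) (a', b')).
right=> b b'; rewrite !SigmaB_on_fiber => /existsP[a fab] /existsP[a' fab'].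
exact: (eq_B (a, b) (a', b')).
Qed.

End FiberSplitting.

Theorem lemma4p3 (K : nat) (p n : 'I_K -> nat) (M : nat)
  (hp : forall nu, prime (p nu)) (hinj : injective p)
  (hn : forall nu, 0 < n nu)
  (hM : M = \prod_(nu < K) p nu ^ n nu)
  (A B : {set 'I_M}) (hAB : tiling A B)
  (x : 'I_M) (i : 'I_K) :
  let Z := fiber x (p i) in
  (splits_with_parity A B Z (p i) (n i) \/
   splits_with_parity B A Z (p i) (n i)) /\
  (forall a b, a \in SigmaA A B Z -> b \in SigmaB A B Z ->
     SigmaA A B Z \subset Pi a (p i ^ (n i).-1) /\
     SigmaB A B Z \subset Pi b (p i ^ (n i).-1)).
Proof.
rewrite /=; pose M' := \prod_(nu < K | nu != i) p nu ^ n nu.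
have M_eq : M = p i ^ n i * M' by rewrite hM (bigD1 i).
have coprime_M' : coprime (p i) M'.
  apply: (big_ind (coprime (p i))) => [|u v cu cv|nu nu_neq_i].
  - exact: coprimen1.
  - by rewrite coprimeMr cu.
  - rewrite coprime_pexpr // prime_coprime // dvdn_prime2 //.
    by apply: contra nu_neq_i => /eqP/hinj ->.
split; last first.
  move=> a b Sa Sb; split; first exact: (SigmaA_sub_Pi (hp i) (hn i) coprime_M' M_eq hAB Sa).
  exact: (SigmaB_sub_Pi (hp i) (hn i) coprime_M' M_eq hAB Sb).
have [eq_A|eq_B] := fiber_dichotomy x (hp i) (hn i) coprime_M' M_eq hAB; [left|right].
  exact: (splits_of_SigmaA_eq_mod (hp i) (hn i) coprime_M' M_eq hAB eq_A).
apply: splits_of_SigmaA_eq_mod (hp i) (hn i) coprime_M' M_eq (tiling_sym hAB) _.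
by rewrite SigmaA_swap.
Qed.
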